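(* Let $\mathbf{v}$ be quasi-definite with SMOP $(P_n)$, recurrence coefficients $(b_n),(a_n)$ and monic Jacobi matrix $J$; let $c,\widehat{\mathbf{v}}_0\in\mathbb{C}$ with $D_n:=\mathbf{v}_0P^{(1)}_{n-1}(c)+\widehat{\mathbf{v}}_0P_n(c)\ne0$ for all $n\ge0$, and $\widehat{\mathbf{v}}=(x-c)^{-1}\mathbf{v}+\widehat{\mathbf{v}}_0\boldsymbol\delta_c$ with SMOP $(\widehat P_n)$ and associated polynomials of the first kind $(\widehat P^{(1)}_n)$, whose monic Jacobi matrix is $\widehat J^{(1)}$. Let $\ell_n=-D_n/D_{n-1}$ ($n\ge1$) and $\beta_n=-\widehat P_{n+1}(c)/\widehat P_n(c)$ ($n\ge0$), so that $J-cI=UL$ with $U$ upper bidiagonal (diagonal $\beta_0,\beta_1,\dots$, superdiagonal $1$) and $L$ lower bidiagonal (diagonal $1$, subdiagonal $\ell_1,\ell_2,\dots$). Let $S_n=P_n+\frac{\mathbf{v}_0}{\widehat{\mathbf{v}}_0}P^{(1)}_{n-1}$ (the co-recursive polynomials of parameter $-\mathbf{v}_0/\widehat{\mathbf{v}}_0$ of $\mathbf{v}$), let $\mathbf{v}^\alpha$ be a quasi-definite functional whose SMOP is $(S_n)$, and let $J_\alpha$ be the monic Jacobi matrix of $(S_n)$. Then: (1) $(\widehat P^{(1)}_n)$ is the SMOP of $(x-c)\mathbf{v}^\alpha$, i.e. up to a nonzero factor $\widehat{\mathbf{v}}^{(1)}=(x-c)\mathbf{v}^\alpha$; (2) $J_\alpha-cI=\widehat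 L\widehat U$ and $\widehat J^{(1)}-cI=\widehat U\widehat L$, where $\widehat L$ is lower bidiagonal with diagonal $1$ and subdiagonal $\beta_1,\beta_2,\dots$, and $\widehat U$ is upper bidiagonal with diagonal $\ell_1,\ell_2,\dots$ and superdiagonal $1$.
   Context: Linear functionals on complex polynomials; $\langle(x-c)^{-1}\mathbf{v},p\rangle=\langle\mathbf{v},(p(x)-p(c))/(x-c)\rangle$, $\langle\boldsymbol\delta_c,p\rangle=p(c)$, $\langle(x-c)\mathbf{w},p\rangle=\langle\mathbf{w},(x-c)p\rangle$. Quasi-definite: all leading principal Hankel minors nonzero; SMOP = sequence of monic orthogonal polynomials with $xP_n=P_{n+1}+b_nP_n+a_nP_{n-1}$, $P_{-1}=0,P_0=1$, $a_n\neq0$; the hypothesis $D_n\ne0$ guarantees $\widehat{\mathbf{v}}$ is quasi-definite with $\widehat P_n=P_n+\ell_nP_{n-1}$ and $\widehat P_n(c)\ne0$. Associated polynomials of the first kind: monic, $xP^{(1)}_n=P^{(1)}_{n+1}+b_{n+1}P^{(1)}_n+a_{n+1}P^{(1)}_{n-1}$, $P^{(1)}_{-1}=0,P^{(1)}_0=1$. Monic Jacobi matrix: tridiagonal, diagonal $(b_0,b_1,\dots)$, superdiagonal $1$'s, subdiagonal $(a_1,a_2,\dots)$. *)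

From HB Require Import structures.
From mathcomp Require Import all_boot all_order all_algebra.
Set Implicit Arguments. Unset Strict Implicit. Unset Printing Implicit Defensive.
Import Order.TTheory GRing.Theory Num.Theory.
Local Open Scope ring_scope.

Section Defs.
Variable C : fieldType.

(* A linear functional on C[x] is represented by its moment sequence
   m n = <v, x^n>; its action on a polynomial is extended by linearity. *)
Definition functional := nat -> C.

Definition fapp (m : functional) (p : {poly C}) : C :=
  \sum_(i < size p) p`_i * m i.

Definition of_lin (f : {poly C} -> C) : functional := fun n => f 'X^n.

(* <(x-c)^{-1} v, p> = <v, (p(x) - p(c)) / (x - c)> *)
Definition fdivXc (c : C) (m : functional) : functional :=
  of_lin (fun p => fapp m ((p - (p.[c])%:P) %/ ('X - c%:P))).

Definition fdelta (c : C) : functional := of_lin (fun p => p.[c]).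

Definition fmulXc (c : C) (m : functional) : functional :=
  of_lin (fun p => fapp m (('X - c%:P) * p)).

Definition fadd (m1 m2 : functional) : functional := fun n => m1 n + m2 n.
Definition fscale (a : C) (m : functional) : functional := fun n => a * m n.

Definition quasi_definite (m : functional) : Prop :=
  forall n : nat, \det (\matrix_(i < n.+1, j < n.+1) m (i + j)%N) != 0.

Definition is_SMOP (m : functional) (P : nat -> {poly C}) : Prop :=
  (forall n, P n \is monic /\ size (P n) = n.+1) /\
  (forall n k, n != k -> fapp m (P n * P k) = 0) /\
  (forall n, fapp m (P n * P n) != 0).

Definition pm1 (P : nat -> {poly C}) (n : nat) : {poly C} :=
  if n is k.+1 then P k else 0.

Definition is_rec_coef (P : nat -> {poly C}) (b a : nat -> C) : Prop :=
  forall n, 'X * P n = P n.+1 + b n *: P n + a n *: pm1 P n.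

(* monic polynomials generated by x Q_n = Q_{n+1} + b_n Q_n + a_n Q_{n-1},
   Q_{-1} = 0, Q_0 = 1; recpair returns (Q_n, Q_{n-1}) *)
Fixpoint recpair (b a : nat -> C) (n : nat) : {poly C} * {poly C} :=
  match n with
  | 0 => (1, 0)
  | k.+1 => let (q, q') := recpair b a k in
            (('X - (b k)%:P) * q - a k *: q', q)
  end.

Definition rec_poly (b a : nat -> C) (n : nat) : {poly C} := (recpair b a n).1.

Definition assoc1 (b a : nat -> C) : nat -> {poly C} :=
  rec_poly (fun n => b n.+1) (fun n => a n.+1).

Definition imatrix := nat -> nat -> C.

Definition imx_id : imatrix := fun i j => (i == j)%:R.
Definition imx_subs (A : imatrix) (c : C) : imatrix :=
  fun i j => A i j - c * imx_id i j.

(* C = A B as infinite matrices, each entry being a finitely supported sum: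
   the partial sums are eventually equal to C i j *)
Definition imx_prod_eq (A B M : imatrix) : Prop :=
  forall i j, exists N, forall K, (N <= K)%N ->
    \sum_(k < K) A i k * B k j = M i j.

Definition jacobi (b a : nat -> C) : imatrix := fun i j =>
  if i == j then b i
  else if j == i.+1 then 1
  else if i == j.+1 then a i
  else 0.

Definition lower_bidiag1 (s : nat -> C) : imatrix := fun i j =>
  if i == j then 1 else if i == j.+1 then s i else 0.

Definition upper_bidiag1 (d : nat -> C) : imatrix := fun i j =>
  if i == j then d i.+1 else if j == i.+1 then 1 else 0.

End Defs.

From HB Require Import structures.
From mathcomp Require Import all_boot all_order all_algebra.
From mathcomp Require Import ring zify.
Set Implicit Arguments. Unset Strict Implicit. Unset Printing Implicit Defensive.
Import Order.TTheory GRing.Theory Num.Theory.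
Local Open Scope ring_scope.

(* The
      characterisation then gives Ph_n = P_n + ell_n P_{n-1} and
      (x - c) P_n = Ph_{n+1} + beta_n Ph_n, from which the recurrence
      coefficients of P and Ph are read off in terms of ell and beta.
   4. S_n obeys the recurrence of P with b_0 replaced by b_0 - beta_0.  With
      Q_n = S_{n+1} + ell_{n+1} S_n we get (x - c) S_n = Q_n + beta_n Q_{n-1}
      and (x - c) Ph1_n = Q_n, so Ph1 is orthogonal for (x - c) valpha.
   5. Products of bidiagonal matrices are tridiagonal with explicit entries;
      comparing them with the recurrence coefficients of S and Ph1 gives the
      two factorisations of part (2). *)

Section Functionals.
Variable C : fieldType.
Implicit Types (m : functional C) (p q : {poly C}).

Lemma fapp_widen m N p : (size p <= N)%N -> fapp m p = \sum_(i < N) p`_i * m i.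
Proof.
move=> H; rewrite /fapp (big_ord_widen N (fun i => p`_i * m i) H) big_mkcond.
apply: eq_bigr => i _; case: ifP => // /negbT; rewrite -leqNgt => /(nth_default 0) ->.
by rewrite mul0r.
Qed.

Lemma fappD m p q : fapp m (p + q) = fapp m p + fapp m q.
Proof.
set N := maxn (size p) (size q).
rewrite !(@fapp_widen m N) ?leq_maxl ?leq_maxr ?size_polyD // -big_split.
by apply: eq_bigr => i _; rewrite coefD mulrDl.
Qed.

Lemma fappZ m a p : fapp m (a *: p) = a * fapp m p.
Proof.
rewrite !(@fapp_widen m (size p)) ?size_scale_leq // mulr_sumr.
by apply: eq_bigr => i _; rewrite coefZ mulrA.
Qed.

Lemma fapp0 m : fapp m 0 = 0.
Proof. by rewrite /fapp size_poly0 big_ord0. Qed.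

Lemma fappB m p q : fapp m (p - q) = fapp m p - fapp m q.
Proof. by rewrite fappD -scaleN1r fappZ mulN1r. Qed.

Lemma fapp1 m : fapp m 1 = m 0%N.
Proof. by rewrite /fapp size_poly1 big_ord1 coef1 mul1r. Qed.

Lemma fapp_of_lin (f : {poly C} -> C) p :
  (forall p q, f (p + q) = f p + f q) -> (forall a p, f (a *: p) = a * f p) ->
  fapp (of_lin f) p = f p.
Proof.
move=> fD fZ.
have fsum n (F : 'I_n -> {poly C}) : f (\sum_(i < n) F i) = \sum_(i < n) f (F i).
  elim: n F => [|n IH] F; last by rewrite !big_ord_recr /= fD IH.
  by rewrite !big_ord0 -(scale0r 0) fZ mul0r.
rewrite -[in RHS](coefK p) poly_def fsum /fapp /of_lin.
by apply: eq_bigr => i _; rewrite fZ.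
Qed.

Lemma fapp_add m1 m2 p : fapp (fadd m1 m2) p = fapp m1 p + fapp m2 p.
Proof. by rewrite /fapp -big_split; apply: eq_bigr => i _; rewrite mulrDr. Qed.

Lemma fapp_scale a m p : fapp (fscale a m) p = a * fapp m p.
Proof. by rewrite /fapp mulr_sumr; apply: eq_bigr => i _; rewrite mulrCA. Qed.

Lemma fapp_delta c p : fapp (fdelta c) p = p.[c].
Proof. by apply: fapp_of_lin => [p1 q1|a p1]; rewrite ?hornerD ?hornerZ. Qed.

Lemma fapp_mulXc c m p : fapp (fmulXc c m) p = fapp m (('X - c%:P) * p).
Proof.
apply: fapp_of_lin => [p1 q1|a p1]; first by rewrite mulrDr fappD.
by rewrite -scalerAr fappZ.
Qed.

Definition ddiff c p := (p - (p.[c])%:P) %/ ('X - c%:P).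

Lemma ddiffD c p q : ddiff c (p + q) = ddiff c p + ddiff c q.
Proof. rewrite /ddiff hornerD polyCD -divpD; congr (_ %/ _); ring. Qed.

Lemma ddiffZ c a p : ddiff c (a *: p) = a *: ddiff c p.
Proof. by rewrite /ddiff hornerZ polyCM mul_polyC -scalerBr divpZl. Qed.

Lemma ddiffC c a : ddiff c a%:P = 0.
Proof. by rewrite /ddiff hornerC subrr div0p. Qed.

Lemma ddiff_XsubCM c q : ddiff c (('X - c%:P) * q) = q.
Proof.
by rewrite /ddiff hornerM hornerXsubC subrr mul0r subr0 mulKp ?polyXsubC_eq0.
Qed.

Lemma ddiffXM c p : ddiff c ('X * p) = p + c *: ddiff c p.
Proof.
have -> : 'X * p = ('X - c%:P) * p + c *: p by rewrite -mul_polyC; ring.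
by rewrite ddiffD ddiffZ ddiff_XsubCM.
Qed.

Lemma fapp_divXc c m p : fapp (fdivXc c m) p = fapp m (ddiff c p).
Proof.
apply: (@fapp_of_lin (fun p => fapp m (ddiff c p))) => [p1 q1|a p1].
  by rewrite ddiffD fappD.
by rewrite ddiffZ fappZ.
Qed.

Lemma divp_XsubC c q :
  q = ('X - c%:P) * (q %/ ('X - c%:P)) + (q.[c])%:P /\
  size (q %/ ('X - c%:P)) = (size q).-1.
Proof.
split; first by rewrite {1}(divp_eq q ('X - c%:P)) modp_XsubC mulrC.
by rewrite size_divp ?polyXsubC_eq0 // size_XsubC subn1.
Qed.

Lemma coefXsubCM c q i : (('X - c%:P) * q)`_i.+1 = q`_i - c * q`_i.+1.
Proof. by rewrite mulrBl coefB coefXM coefCM. Qed.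

End Functionals.

Section MonicOrthogonal.
Variable C : fieldType.
Implicit Types (m : functional C) (p q r T : {poly C}) (Q : nat -> {poly C}).

Definition monic_family Q := forall n, Q n \is monic /\ size (Q n) = n.+1.

Lemma monic_family_coef Q n : monic_family Q -> (Q n)`_n = 1.
Proof. by move=> F; have [/monicP] := F n; rewrite /lead_coef => M S; rewrite -M S. Qed.

Lemma monic_family0 Q : monic_family Q -> Q 0 = 1.
Proof.
by move=> F; rewrite [Q 0]size1_polyC ?(proj2 (F 0)) // (monic_family_coef 0 F).
Qed.

Lemma size_pm1 Q n : monic_family Q -> (size (pm1 Q n) <= n)%N.
Proof. by move=> F; case: n => [|n] /=; rewrite ?size_poly0 // (proj2 (F n)). Qed.

Lemma coef_pm1 Q n : monic_family Q -> (pm1 Q n)`_n = 0.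
Proof. by move=> F; apply: nth_default; apply: size_pm1. Qed.

Lemma size_sub_lead Q p j : monic_family Q -> (size p <= j.+1)%N ->
  (size (p - p`_j *: Q j)%R <= j)%N.
Proof.
move=> F H; apply/leq_sizeP => i Hi.
rewrite coefB coefZ; case: (ltngtP i j) => [|Hij|->]; first by lia.
  have s1 : (size p <= i)%N by apply: leq_trans H Hij.
  have s2 : (size (Q j) <= i)%N by rewrite (proj2 (F j)).
  by rewrite (nth_default 0 s1) (nth_default 0 s2) mulr0 subrr.
by rewrite (monic_family_coef j F) mulr1 subrr.
Qed.

Section SMOP.
Variables (m : functional C) (Q : nat -> {poly C}).
Hypothesis HQ : is_SMOP m Q.

Lemma SMOP_monic : monic_family Q.
Proof. by case: HQ. Qed.

Lemma SMOP_orth_low n p : (size p <= n)%N -> fapp m (Q n * p) = 0.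
Proof.
have [_ [Ho _]] := HQ.
suff low j : (j <= n)%N -> forall p, (size p <= j)%N -> fapp m (Q n * p) = 0.
  exact: low.
elim: j => [|j IH] Hj {}p Hp.
  by move: Hp; rewrite leqn0 size_poly_eq0 => /eqP ->; rewrite mulr0 fapp0.
have -> : Q n * p = Q n * (p - p`_j *: Q j) + p`_j *: (Q n * Q j).
  by rewrite scalerAr -mulrDr subrK.
rewrite fappD (IH (ltnW Hj)) ?(size_sub_lead SMOP_monic Hp) // add0r fappZ Ho ?mulr0 //.
by rewrite neq_ltn Hj orbT.
Qed.

Lemma SMOP_orth_lead n p : (size p <= n.+1)%N ->
  fapp m (Q n * p) = p`_n * fapp m (Q n * Q n).
Proof.
move=> Hp.
have -> : Q n * p = Q n * (p - p`_n *: Q n) + p`_n *: (Q n * Q n).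
  by rewrite scalerAr -mulrDr subrK.
by rewrite fappD SMOP_orth_low ?(size_sub_lead SMOP_monic Hp) // add0r fappZ.
Qed.

Lemma SMOP_orth_zero n r : (size r <= n)%N ->
  (forall q, (size q <= n)%N -> fapp m (r * q) = 0) -> r = 0.
Proof.
move=> Hr Ho; have F := SMOP_monic; have [_ [_ Hn]] := HQ.
apply/eqP; apply/negPn/negP => r0.
set d := (size r).-1.
have Sd : size r = d.+1 by rewrite /d prednK // lt0n size_poly_eq0.
have := SMOP_orth_lead (eq_leq Sd).
rewrite mulrC Ho; last by rewrite (proj2 (F d)) -Sd.
move/esym/eqP; rewrite mulf_eq0 (negPf (Hn d)) orbF.
have -> : r`_d = lead_coef r by rewrite /lead_coef Sd.
by rewrite lead_coef_eq0 (negPf r0).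
Qed.

Lemma SMOP_unique n T : size T = n.+1 -> T`_n = 1 ->
  (forall q, (size q <= n)%N -> fapp m (T * q) = 0) -> T = Q n.
Proof.
move=> ST T1 Ho; have F := SMOP_monic.
apply/eqP; rewrite -subr_eq0; apply/eqP; apply: (@SMOP_orth_zero n).
  apply/leq_sizeP => j Hj; rewrite coefB; case: (ltngtP j n) => [|Hnj|->]; first by lia.
    by rewrite !nth_default ?subrr ?ST ?(proj2 (F n)).
  by rewrite T1 (monic_family_coef n F) subrr.
by move=> q Hq; rewrite mulrBl fappB Ho // SMOP_orth_low // subrr.
Qed.

End SMOP.

Lemma rec_coef_unique Q b a n B A : monic_family Q -> is_rec_coef Q b a ->
  'X * Q n = Q n.+1 + B *: Q n + A *: pm1 Q n -> B = b n /\ ((0 < n)%N -> A = a n).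
Proof.
move=> F R E; have E0 := R n; rewrite E in E0.
have E1 : (B - b n) *: Q n + (A - a n) *: pm1 Q n = 0.
  rewrite !scalerBl; move/eqP: E0; rewrite -subr_eq0 => /eqP <-; ring.
have HB : B = b n.
  have := congr1 (fun p => p`_n) E1.
  rewrite /= coefD !coefZ (monic_family_coef n F) (coef_pm1 n F) mulr1 mulr0 addr0 coef0.
  by move=> /eqP; rewrite subr_eq0 => /eqP.
split=> // n0; move: E1; rewrite HB subrr scale0r add0r.
case: n n0 {E E0 HB} => // k _ /= /eqP.
by rewrite scaler_eq0 (negPf (monic_neq0 (proj1 (F k)))) orbF subr_eq0 => /eqP.
Qed.

Lemma recpair_snd (b a : nat -> C) k : (recpair b a k).2 = pm1 (rec_poly b a) k.
Proof. by case: k => [|k] //=; rewrite /rec_poly; case: (recpair b a k). Qed.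

Lemma rec_poly0 (b a : nat -> C) : rec_poly b a 0 = 1.
Proof. by []. Qed.

Lemma rec_polyS (b a : nat -> C) k : rec_poly b a k.+1 =
  ('X - (b k)%:P) * rec_poly b a k - a k *: pm1 (rec_poly b a) k.
Proof. by rewrite -recpair_snd /rec_poly /=; case: (recpair b a k). Qed.

Lemma assoc1S (b a : nat -> C) k : assoc1 b a k.+1 =
  ('X - (b k.+1)%:P) * assoc1 b a k - a k.+1 *: pm1 (assoc1 b a) k.
Proof. exact: rec_polyS. Qed.

Lemma rec_poly_monic (b a : nat -> C) : monic_family (rec_poly b a).
Proof.
suff H n : size (rec_poly b a n) = n.+1 /\ (rec_poly b a n)`_n = 1 /\
           (size (pm1 (rec_poly b a) n) <= n)%N.
  move=> n; have [S [Cf _]] := H n; split=> //; apply/monicP; by rewrite /lead_coef S.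
elim: n => [|n [S [Cf Sp]]].
  by rewrite rec_poly0 size_poly1 coefC /= size_poly0.
have Hm : size (('X - (b n)%:P) * rec_poly b a n) = n.+2.
  by rewrite size_monicM ?monicXsubC ?size_XsubC ?S // -size_poly_eq0 S.
have Hs : (size (a n *: pm1 (rec_poly b a) n) <= n.+1)%N.
  by apply: leq_trans (size_scale_leq _ _) _; apply: leq_trans Sp _.
rewrite rec_polyS /=; split; last split; last by rewrite S.
  by rewrite size_polyDl ?size_polyN Hm.
have Sr : (size (rec_poly b a n) <= n.+1)%N by rewrite S.
by rewrite coefB coefXsubCM Cf (nth_default 0 Hs) (nth_default 0 Sr) mulr0 !subr0.
Qed.

End MonicOrthogonal.

Section Bidiagonal.
Variable C : fieldType.
Implicit Types (s d X : nat -> C).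

Lemma sum_trunc (F : nat -> C) N K : (N <= K)%N -> (forall k, (N <= k)%N -> F k = 0) ->
  \sum_(k < K) F k = \sum_(k < N) F k.
Proof.
move=> H HF; rewrite -!(big_mkord xpredT) (big_cat_nat (leq0n N) H) /=.
rewrite [X in _ + X]big1_seq ?addr0 // => i /andP[_]; rewrite mem_index_iota => /andP[Hi _].
exact: HF.
Qed.

Lemma sum_lower s X i K : (i < K)%N ->
  \sum_(k < K) lower_bidiag1 s i k * X k = X i + (if i is i'.+1 then s i * X i' else 0).
Proof.
move=> H; rewrite (@sum_trunc (fun k => lower_bidiag1 s i k * X k) i.+1) //; last first.
  move=> k Hk; rewrite /lower_bidiag1 !ifF ?mul0r //; apply/eqP; lia.
rewrite big_ord_recr /= {2}/lower_bidiag1 eqxx mul1r addrC; congr (_ + _).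
case: i {H} => [|j]; first by rewrite big_ord0.
rewrite big_ord_recr /= big1 ?add0r => [|k _]; last first.
  rewrite /lower_bidiag1 !ifF ?mul0r //; apply/eqP; have := ltn_ord k; lia.
rewrite /lower_bidiag1 ifF ?eqxx //; apply/eqP; lia.
Qed.

Lemma sum_upper d X i K : (i.+1 < K)%N ->
  \sum_(k < K) upper_bidiag1 d i k * X k = d i.+1 * X i + X i.+1.
Proof.
move=> H; rewrite (@sum_trunc (fun k => upper_bidiag1 d i k * X k) i.+2) //; last first.
  move=> k Hk; rewrite /upper_bidiag1 !ifF ?mul0r //; apply/eqP; lia.
rewrite !big_ord_recr /= big1 ?add0r => [|k _]; last first.
  rewrite /upper_bidiag1 !ifF ?mul0r //; apply/eqP; have := ltn_ord k; lia.
rewrite /upper_bidiag1 eqxx ifF ?eqxx ?mul1r //; apply/eqP; lia.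
Qed.

Lemma lower_upper_prod s d : imx_prod_eq (lower_bidiag1 s) (upper_bidiag1 d)
  (jacobi (fun i => d i.+1 + (if i is 0 then 0 else s i)) (fun i => s i * d i)).
Proof.
move=> i j; exists i.+1 => K HK; rewrite (sum_lower s (fun k => upper_bidiag1 d k j)) // /upper_bidiag1 /jacobi.
case: i HK => [|i] _ /=; do ! case: eqP => ? //=; subst; try lia; ring.
Qed.

Lemma upper_lower_prod s d : imx_prod_eq (upper_bidiag1 d) (lower_bidiag1 s)
  (jacobi (fun i => d i.+1 + s i.+1) (fun i => d i.+1 * s i)).
Proof.
move=> i j; exists i.+2 => K HK; rewrite (sum_upper d (fun k => lower_bidiag1 s k j)) // /lower_bidiag1 /jacobi.
do ! case: eqP => ? //=; subst; try lia; ring.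
Qed.
Lemma imx_prod_eq_ext (A B M M' : imatrix C) :
  (forall i j, M i j = M' i j) -> imx_prod_eq A B M -> imx_prod_eq A B M'.
Proof. by move=> E H i j; have [N HN] := H i j; exists N => K /HN ->. Qed.

(* J - cI for a Jacobi matrix J is the Jacobi matrix with shifted diagonal;
   the entry a_0 never occurs. *)
Lemma jacobi_subs (b a b' a' : nat -> C) c :
  (forall i, b i - c = b' i) -> (forall i, (0 < i)%N -> a i = a' i) ->
  forall i j, imx_subs (jacobi b a) c i j = jacobi b' a' i j.
Proof.
move=> Eb Ea i j; rewrite /imx_subs /jacobi /imx_id.
case: eqP => [->|_]; first by rewrite mulr1 Eb.
rewrite mulr0 subr0; case: ifP => // _.
by case: eqP => // ->; rewrite Ea.
Qed.

End Bidiagonal.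

Section GeronimusTransform.
Variable C : fieldType.
Variables (v : functional C) (P : nat -> {poly C}) (b a : nat -> C) (c vh0 : C)
  (Ph : nat -> {poly C}) (bh ah : nat -> C)
  (valpha : functional C) (balpha aalpha : nat -> C).
Hypotheses (HSv : is_SMOP v P) (Rv : is_rec_coef P b a).
Let P1 := assoc1 b a.
Let D n := v 0%N * (pm1 P1 n).[c] + vh0 * (P n).[c].
Hypothesis HD : forall n, D n != 0.
Let vh := fadd (fdivXc c v) (fscale vh0 (fdelta c)).
Hypotheses (HSh : is_SMOP vh Ph) (Rh : is_rec_coef Ph bh ah).
Let Ph1 := assoc1 bh ah.
Let ell n := - D n / D n.-1.
Let beta n := - (Ph n.+1).[c] / (Ph n).[c].
Let S n := P n + (v 0%N / vh0) *: pm1 P1 n.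
Hypotheses (HSa : is_SMOP valpha S) (Ra : is_rec_coef S balpha aalpha).

Let Pmonic : monic_family P := SMOP_monic HSv.
Let Phmonic : monic_family Ph := SMOP_monic HSh.
Let Smonic : monic_family S := SMOP_monic HSa.

Lemma fapp_vh p : fapp vh p = fapp v (ddiff c p) + vh0 * p.[c].
Proof. by rewrite fapp_add fapp_divXc fapp_scale fapp_delta. Qed.

Lemma fapp_vh_XsubCM q : fapp vh (('X - c%:P) * q) = fapp v q.
Proof. by rewrite fapp_vh ddiff_XsubCM hornerM hornerXsubC subrr !mul0r mulr0 addr0. Qed.

Lemma fapp_P n : fapp v (P n) = if n is 0 then v 0%N else 0.
Proof.
case: n => [|n]; first by rewrite (monic_family0 Pmonic) fapp1.
by rewrite -[P _]mulr1 (SMOP_orth_low HSv) // size_poly1.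
Qed.

Lemma fapp_ddiffPS n : fapp v (ddiff c (P n.+1)) =
  fapp v (P n) + (c - b n) * fapp v (ddiff c (P n)) - a n * fapp v (ddiff c (pm1 P n)).
Proof.
have -> : P n.+1 = 'X * P n + (- b n) *: P n + (- a n) *: pm1 P n.
  by rewrite Rv !scaleNr; ring.
by rewrite !ddiffD !ddiffZ ddiffXM !fappD !fappZ; ring.
Qed.

Lemma fapp_ddiffP n : fapp v (ddiff c (P n)) = v 0%N * (pm1 P1 n).[c].
Proof.
suff H k : fapp v (ddiff c (P k)) = v 0%N * (pm1 P1 k).[c] /\
           fapp v (ddiff c (P k.+1)) = v 0%N * (pm1 P1 k.+1).[c] by case: (H n).
have ddiffP0 : ddiff c (P 0) = 0 by rewrite (monic_family0 Pmonic) -polyC1 ddiffC.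
elim: k => [|k [IH1 IH2]].
  rewrite fapp_ddiffPS ddiffP0 /= -polyC0 ddiffC fapp0 fapp_P /P1 /assoc1 rec_poly0.
  by rewrite !hornerC; split; ring.
split=> //; rewrite fapp_ddiffPS fapp_P IH2 /= IH1 /= /P1 assoc1S.
by rewrite hornerD hornerN hornerZ hornerM hornerXsubC; ring.
Qed.

(* the normalisation behind ell_n = - D_n / D_{n-1} *)
Lemma fapp_vhP n : fapp vh (P n) = D n.
Proof. by rewrite fapp_vh fapp_ddiffP. Qed.

(* D_0 = vh0 *)
Lemma vh0_neq0 : vh0 != 0.
Proof.
by have := HD 0; rewrite /D /= horner0 mulr0 add0r (monic_family0 Pmonic) hornerC mulr1.
Qed.

(* Ph_n(c) != 0: otherwise Ph_{k+1} = (x - c) T with T monic of degree k and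
   <v, P_k T> = <vh, P_k Ph_{k+1}> = 0, contradicting <v, P_k P_k> != 0. *)
Lemma Ph_c_neq0 n : (Ph n).[c] != 0.
Proof.
case: n => [|k]; first by rewrite (monic_family0 Phmonic) hornerC oner_eq0.
apply/negP => /eqP Hc.
have [E ST] := divp_XsubC c (Ph k.+1).
set T := Ph k.+1 %/ _ in E ST; rewrite Hc addr0 in E.
have Sz : size T = k.+1 by rewrite ST (proj2 (Phmonic k.+1)).
have Tk : T`_k = 1.
  have := monic_family_coef k.+1 Phmonic; rewrite E coefXsubCM.
  by rewrite (nth_default 0 (_ : size T <= k.+1)%N) ?Sz // mulr0 subr0.
have : fapp v (P k * T) = 0.
  rewrite -fapp_vh_XsubCM mulrCA -E mulrC (SMOP_orth_low HSh) //.
  by rewrite (proj2 (Pmonic k)).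
rewrite (SMOP_orth_lead HSv (eq_leq Sz)) Tk mul1r; apply/eqP.
by have [_ [_ ->]] := HSv.
Qed.

(* Ph_n = P_n + ell_n P_{n-1}: the right side is orthogonal for vh to all
   lower degrees, since <vh, q> = <v, dd q> + vh0 q(c). *)
Lemma Ph_expand n : Ph n = P n + ell n *: pm1 P n.
Proof.
case: n => [|k]; first by rewrite /= scaler0 addr0 (monic_family0 Pmonic) (monic_family0 Phmonic).
have Sz : size (P k.+1 + ell k.+1 *: pm1 P k.+1) = k.+2.
  rewrite size_polyDl (proj2 (Pmonic k.+1)) //.
  by apply: leq_ltn_trans (size_scale_leq _ _) _; rewrite /= (proj2 (Pmonic k)).
symmetry; apply: (SMOP_unique HSh Sz).
  by rewrite coefD coefZ (monic_family_coef k.+1 Pmonic) (coef_pm1 k.+1 Pmonic) mulr0 addr0.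
move=> q Hq; have [E ST] := divp_XsubC c q.
set r := q %/ _ in E ST.
have Sr : (size r <= k)%N by rewrite ST; move: Hq; case: (size q) => //= ?; lia.
rewrite E mulrDr mulrCA fappD fapp_vh_XsubCM (mulrC _ (q.[c])%:P) mul_polyC fappZ.
rewrite mulrDl -scalerAl !fappD !fappZ /= !fapp_vhP.
rewrite (SMOP_orth_low HSv Sr) (SMOP_orth_low HSv (_ : size r <= k.+1)%N); last by lia.
by rewrite /ell /= mulr0 addr0 add0r; have Dk := HD k; field.
Qed.

(* (x - c) P_n = Ph_{n+1} + beta_n Ph_n: the right side vanishes at c, and its
   quotient by x - c is monic of degree n and v-orthogonal to lower degrees. *)
Lemma XsubCM_P n : ('X - c%:P) * P n = Ph n.+1 + beta n *: Ph n.
Proof.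
set R := Ph n.+1 + beta n *: Ph n.
have Rc : R.[c] = 0 by rewrite /R hornerD hornerZ /beta; have Phc := Ph_c_neq0 n; field.
have [E ST] := divp_XsubC c R.
set T := R %/ _ in E ST; rewrite Rc addr0 in E.
have SR : size R = n.+2.
  rewrite size_polyDl (proj2 (Phmonic n.+1)) //.
  by apply: leq_ltn_trans (size_scale_leq _ _) _; rewrite (proj2 (Phmonic n)).
have Sz : size T = n.+1 by rewrite ST SR.
suff -> : P n = T by rewrite -E.
symmetry; apply: (SMOP_unique HSv Sz).
  have : R`_n.+1 = 1.
    rewrite coefD coefZ (monic_family_coef n.+1 Phmonic).
    by rewrite (nth_default 0 (_ : size (Ph n) <= n.+1)%N) ?(proj2 (Phmonic n)) // mulr0 addr0.
  by rewrite E coefXsubCM (nth_default 0 (_ : size T <= n.+1)%N) ?Sz // mulr0 subr0.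
move=> q Hq; rewrite -fapp_vh_XsubCM mulrA -E mulrDl -scalerAl fappD fappZ.
by rewrite !(SMOP_orth_low HSh) ?mulr0 ?addr0 //; lia.
Qed.

(* J - cI = U L in terms of the recurrence coefficients of P. *)
Lemma rec_coef_P n : b n = c + ell n.+1 + beta n /\ ((0 < n)%N -> a n = beta n * ell n).
Proof.
have E : 'X * P n = P n.+1 + (c + ell n.+1 + beta n) *: P n + (beta n * ell n) *: pm1 P n.
  have -> : 'X * P n = ('X - c%:P) * P n + c%:P * P n by ring.
  rewrite XsubCM_P !Ph_expand /= -!mul_polyC !polyCD !polyCM; ring.
have [H1 H2] := rec_coef_unique Pmonic Rv E.
by split=> // /H2.
Qed.

(* Jh - cI = L U in terms of the recurrence coefficients of Ph. *)
Lemma rec_coef_Ph n : bh n.+1 = c + beta n.+1 + ell n.+1 /\ ah n.+1 = ell n.+1 * beta n.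
Proof.
have E : 'X * Ph n.+1 = Ph n.+2 + (c + beta n.+1 + ell n.+1) *: Ph n.+1 +
     (ell n.+1 * beta n) *: pm1 Ph n.+1.
  have -> : 'X * Ph n.+1 = ('X - c%:P) * Ph n.+1 + c%:P * Ph n.+1 by ring.
  have -> : ('X - c%:P) * Ph n.+1 = ('X - c%:P) * P n.+1 + ell n.+1 *: (('X - c%:P) * P n).
    by rewrite Ph_expand /= mulrDr scalerAr.
  rewrite !XsubCM_P /= -!mul_polyC !polyCD !polyCM; ring.
have [H1 H2] := rec_coef_unique Phmonic Rh E.
by split; [rewrite H1 | rewrite H2].
Qed.

(* The parameter of the co-recursive polynomials is beta_0. *)
Lemma beta0_eq : beta 0 = v 0%N / vh0.
Proof.
have P0 := monic_family0 Pmonic; have Ph0 := monic_family0 Phmonic.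
have P1e : P 1 = 'X - (b 0)%:P.
  by have := Rv 0; rewrite /= P0 scaler0 addr0 mulr1 => ->; rewrite -mul_polyC; ring.
rewrite /beta Ph0 Ph_expand /= P1e P0 /ell /D /= P1e P0 /P1 /assoc1 rec_poly0 !hornerE divr1.
by have vh0n := vh0_neq0; field.
Qed.

Lemma rec_S n : 'X * S n =
  S n.+1 + (if n is 0 then b 0 - beta 0 else b n) *: S n + a n *: pm1 S n.
Proof.
rewrite beta0_eq; have P0 := monic_family0 Pmonic.
case: n => [|k].
  rewrite /S /= P0 scaler0 addr0 /P1 /assoc1 rec_poly0.
  have := Rv 0; rewrite /= P0 scaler0 addr0 mulr1 => ->.
  rewrite -!mul_polyC !polyCB polyCM; ring.
rewrite /S /= /P1 assoc1S -/(assoc1 b a).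
have E := Rv k.+1; rewrite /= in E.
rewrite mulrDr E -!mul_polyC; ring.
Qed.

Lemma balpha_eq n : balpha n = c + ell n.+1 + (if n is 0 then 0 else beta n).
Proof.
have [<- _] := rec_coef_unique Smonic Ra (rec_S n).
by case: n => [|k]; rewrite (proj1 (rec_coef_P _)) //; ring.
Qed.

Lemma aalpha_eq n : (0 < n)%N -> aalpha n = beta n * ell n.
Proof.
move=> n0; have [_ Ha] := rec_coef_unique Smonic Ra (rec_S n).
by rewrite -Ha // (proj2 (rec_coef_P n)).
Qed.

(* Q_n, which will turn out to be (x - c) Ph1_n. *)
Let Q n := S n.+1 + ell n.+1 *: S n.

(* (x - c) S_n = Q_n + beta_n Q_{n-1}: the factorisation J_alpha - cI = Lh Uh
   read on polynomials. *)
Lemma XsubCM_S k : ('X - c%:P) * S k = Q k + beta k *: pm1 Q k.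
Proof.
have := Ra k; rewrite balpha_eq /Q mulrBl => ->.
case: k => [|k] /=; first by rewrite !scaler0 !addr0 -!mul_polyC !polyCD; ring.
by rewrite aalpha_eq // -!mul_polyC !polyCD !polyCM; ring.
Qed.

Lemma XsubCM_Q k : ('X - c%:P) * Q k =
  Q k.+1 + beta k.+1 *: Q k + ell k.+1 *: (Q k + beta k *: pm1 Q k).
Proof. by rewrite {1}/Q mulrDr -scalerAr !XsubCM_S. Qed.

Lemma XsubCM_Ph1 n : ('X - c%:P) * Ph1 n = Q n.
Proof.
suff H k : ('X - c%:P) * Ph1 k = Q k /\ ('X - c%:P) * pm1 Ph1 k = pm1 Q k.
  by case: (H n).
elim: k => [|k [IH1 IH2]].
  split; last by rewrite /= mulr0.
  rewrite /Ph1 /assoc1 rec_poly0 -(monic_family0 Smonic) XsubCM_S.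
  by rewrite /= scaler0 addr0.
split; last by rewrite /= IH1.
have [Hb Ha] := rec_coef_Ph k.
rewrite /Ph1 assoc1S -/(assoc1 bh ah) mulrBr -scalerAr mulrCA IH1 IH2.
rewrite (_ : 'X - (bh k.+1)%:P = ('X - c%:P) + (c - bh k.+1)%:P); last first.
  by rewrite polyCB; ring.
by rewrite mulrDl XsubCM_Q Hb Ha -!mul_polyC !(polyCD, polyCN, polyCB, polyCM); ring.
Qed.

(* Part (1): Ph1 is the SMOP of (x - c) valpha, because
   <valpha, (x - c) Ph1_n Ph1_k> = <valpha, Q_n Ph1_k>. *)
Lemma Ph1_SMOP : is_SMOP (fmulXc c valpha) Ph1.
Proof.
have Ph1monic : monic_family Ph1 := rec_poly_monic _ _.
have orth n k : (k < n)%N -> fapp valpha (('X - c%:P) * (Ph1 n * Ph1 k)) = 0.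
  move=> kn; rewrite mulrA XsubCM_Ph1 /Q mulrDl -scalerAl fappD fappZ.
  by rewrite !(SMOP_orth_low HSa) ?mulr0 ?addr0 // (proj2 (Ph1monic k)); lia.
split; [exact: Ph1monic | split].
  move=> n k nk; rewrite fapp_mulXc.
  case: (ltngtP k n) => [/orth //|kn|kn]; last by move: nk; rewrite kn eqxx.
  by rewrite [Ph1 n * _]mulrC orth.
move=> n; rewrite fapp_mulXc mulrA XsubCM_Ph1 /Q mulrDl -scalerAl fappD fappZ.
rewrite (SMOP_orth_low HSa) ?(proj2 (Ph1monic n)) // add0r.
rewrite (SMOP_orth_lead HSa) ?(proj2 (Ph1monic n)) // (monic_family_coef n Ph1monic) mul1r.
have [_ [_ Hn]] := HSa.
by rewrite mulf_neq0 // /ell /= mulf_neq0 ?oppr_eq0 ?invr_eq0.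
Qed.

Lemma factor_Jalpha : imx_prod_eq (lower_bidiag1 beta) (upper_bidiag1 ell)
  (imx_subs (jacobi balpha aalpha) c).
Proof.
apply: imx_prod_eq_ext (lower_upper_prod beta ell).
by move=> i j; symmetry; apply: jacobi_subs => k; [rewrite balpha_eq; ring | exact: aalpha_eq].
Qed.

Lemma factor_Jh1 : imx_prod_eq (upper_bidiag1 ell) (lower_bidiag1 beta)
  (imx_subs (jacobi (fun n => bh n.+1) (fun n => ah n.+1)) c).
Proof.
apply: imx_prod_eq_ext (upper_lower_prod beta ell).
move=> i j; symmetry; apply: jacobi_subs => k; have [Hb Ha] := rec_coef_Ph k.
  by rewrite Hb; ring.
by rewrite Ha.
Qed.

End GeronimusTransform.

Theorem mainTheorem14 (C : numClosedFieldType)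
  (v : functional C) (P : nat -> {poly C}) (b a : nat -> C)
  (c vh0 : C)
  (Ph : nat -> {poly C}) (bh ah : nat -> C)
  (valpha : functional C) (balpha aalpha : nat -> C) :
  quasi_definite v -> is_SMOP v P -> is_rec_coef P b a ->
  let P1 := assoc1 b a in
  let D := fun n => v 0%N * (pm1 P1 n).[c] + vh0 * (P n).[c] in
  (forall n, D n != 0) ->
  let vh := fadd (fdivXc c v) (fscale vh0 (fdelta c)) in
  is_SMOP vh Ph -> is_rec_coef Ph bh ah ->
  let Ph1 := assoc1 bh ah in
  let Jh1 := jacobi (fun n => bh n.+1) (fun n => ah n.+1) in
  let ell := fun n => - D n / D n.-1 in
  let beta := fun n => - (Ph n.+1).[c] / (Ph n).[c] in
  let S := fun n => P n + (v 0%N / vh0) *: pm1 P1 n in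
  quasi_definite valpha -> is_SMOP valpha S -> is_rec_coef S balpha aalpha ->
  let Jalpha := jacobi balpha aalpha in
  let Lh := lower_bidiag1 beta in
  let Uh := upper_bidiag1 ell in
  is_SMOP (fmulXc c valpha) Ph1 /\
  imx_prod_eq Lh Uh (imx_subs Jalpha c) /\
  imx_prod_eq Uh Lh (imx_subs Jh1 c).
Proof.
move=> _ HSv Rv P1 D HD vh HSh Rh Ph1 Jh1 ell beta S _ HSa Ra Jalpha Lh Uh.
split; [|split].
- exact: (Ph1_SMOP HSv Rv HD HSh Rh HSa Ra).
- exact: (factor_Jalpha HSv Rv HD HSh HSa Ra).
- exact: (factor_Jh1 HSv Rv HD HSh Rh).
Qed.
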